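(* Let $G=(V,E)$ be a connected almost bipartite permutation graph that contains a hole, let $C$ be a shortest hole of $G$, $m=|C|$, and let $c_0,c_1,\dots,c_{m-1}$ be the vertices of $C$ in cyclic order, with indices taken modulo $m$. Then for every vertex $v\in V$ either $N(v)\cap C=\{c_i\}$ for some $i\in\{0,\dots,m-1\}$, or $N(v)\cap C=\{c_i,c_{i+2}\}$ for some $i\in\{0,\dots,m-1\}$.
   Context: All graphs are finite, simple, undirected; $N(v)$ denotes the (open) neighborhood of $v$. A hole is an induced cycle on at least five vertices. $K_3$ is the triangle and $C_k$ the cycle on $k$ vertices. $T_2$ is the tree on 7 vertices obtained from the claw $K_{1,3}$ by subdividing each of its three edges once. $X_2$ is the 7-vertex graph obtained from a 4-cycle by attaching one new pendant vertex to each of three of its four vertices. $X_3$ is the 7-vertex graph obtained from the domino (two 4-cycles sharing exactly one edge) by attaching one new pendant vertex to one endpoint of the shared edge. A graph is an almost bipartite permutation graph if it contains none of $T_2, X_2, X_3, K_3, C_5,\dots,C_9$ as an induced subgraph. *)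

From mathcomp Require Import all_boot.
Set Implicit Arguments. Unset Strict Implicit. Unset Printing Implicit Defensive.

Definition edges_rel (n : nat) (s : seq (nat * nat)) : rel 'I_n :=
  fun i j => ((nat_of_ord i, nat_of_ord j) \in s) || ((nat_of_ord j, nat_of_ord i) \in s).

Definition cycle_rel (n : nat) : rel 'I_n :=
  fun i j => (nat_of_ord j == (i + 1) %% n) || (nat_of_ord i == (j + 1) %% n).

Arguments edges_rel : clear implicits.
Arguments cycle_rel : clear implicits.

Definition K3 : rel 'I_3 := cycle_rel 3.

(* T2: center 0, subdivision vertices 1 2 3, leaves 4 5 6 *)
Definition T2 : rel 'I_7 :=
  edges_rel 7 [:: (0,1); (0,2); (0,3); (1,4); (2,5); (3,6)].

(* X2: 4-cycle 0-1-2-3-0 with pendants 4,5,6 attached to 0,1,2 *)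
Definition X2 : rel 'I_7 :=
  edges_rel 7 [:: (0,1); (1,2); (2,3); (3,0); (0,4); (1,5); (2,6)].

(* X3: domino = 4-cycles 0-1-2-3-0 and 1-4-5-2-1 sharing edge 1-2,
   plus pendant 6 attached to endpoint 1 of the shared edge *)
Definition X3 : rel 'I_7 :=
  edges_rel 7 [:: (0,1); (1,2); (2,3); (3,0); (1,4); (4,5); (5,2); (1,6)].

Definition induced_in (T : finType) (e : rel T) (n : nat) (h : rel 'I_n) : Prop :=
  exists f : 'I_n -> T, injective f /\ forall i j, e (f i) (f j) = h i j.

Definition simple_graph (T : finType) (e : rel T) : Prop :=
  symmetric e /\ irreflexive e.

Definition connected_graph (T : finType) (e : rel T) : Prop :=
  forall x y, connect e x y.

Definition almost_bipartite_permutation (T : finType) (e : rel T) : Prop :=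
  [/\ ~ induced_in e T2, ~ induced_in e X2, ~ induced_in e X3,
      ~ induced_in e K3
    & forall k : nat, 5 <= k <= 9 -> ~ induced_in e (cycle_rel k)].

Definition is_hole (T : finType) (e : rel T) (m : nat) (c : 'I_m -> T) : Prop :=
  5 <= m /\ injective c /\ forall i j, e (c i) (c j) = cycle_rel m i j.

Definition ord_add (m : nat) (i : 'I_m) (k : nat) : 'I_m :=
  Ordinal (@ltn_pmod (i + k) m (leq_ltn_trans (leq0n i) (ltn_ord i))).

Definition nbr_on (T : finType) (e : rel T) (m : nat) (c : 'I_m -> T) (v : T) : {set T} :=
  [set u | e v u & u \in codom c].

From mathcomp Require Import all_boot zify.
Set Implicit Arguments. Unset Strict Implicit. Unset Printing Implicit Defensive.

(* Let v be off the shortest hole C = c_0 ... c_(m-1) and adjacent to c_j, and let c_(j+g)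
   be the next neighbour of v along C.  The cases g = 1 and g = m - 1 give triangles, and
   3 <= g <= m - 3 closes the hole v c_j ... c_(j+g) of length g + 2 < m.  So consecutive
   neighbours of v on C are 2 or m - 2 apart, unless c_j is the only one.  Three
   neighbours c_j, c_(j+2), c_(j+4) would force c_(j+6) as well, and then v, c_j, c_(j+4),
   c_(j+6) with the pendants c_(j+1), c_(j+3), c_(j+7) induce T2.  Hence N(v) meets C in
   {c_i} or {c_i, c_(i+2)}.  A vertex x adjacent to such a v but to no vertex of C would
   induce T2 centred at c_i, resp. X2 on the square v c_i c_(i+1) c_(i+2), so by
   connectivity every vertex has a neighbour on C.  Excluding C_5, ..., C_9 gives m >= 10,
   which leaves room on C for these 7-vertex configurations. *)

(* An adjacency-preserving map from a pattern in which no two vertices have the same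
   neighbourhood is injective.  Patterns are indexed by nat so that this condition is
   decided by computation. *)
Definition edges_nat (s : seq (nat * nat)) (a b : nat) : bool :=
  ((a, b) \in s) || ((b, a) \in s).

Definition twin_free (n : nat) (h : nat -> nat -> bool) : bool :=
  all (fun a => all (fun b => (a == b) || has (fun k => h a k != h b k) (iota 0 n))
    (iota 0 n)) (iota 0 n).

Section InducedPatterns.
Variables (T : finType) (e : rel T).
Hypothesis simple_e : simple_graph e.

Lemma induced_in_edges_rel n s (x0 : T) (xs : seq T) :
  all (fun p => p.1 != p.2) s -> twin_free n (edges_nat s) ->
  (forall a b, a < b < n -> e (nth x0 xs a) (nth x0 xs b) = edges_nat s a b) ->
  induced_in e (edges_rel n s).
Proof.
case: simple_e => e_sym e_irr loopless tf adj.
have {}adj a b : a < n -> b < n -> e (nth x0 xs a) (nth x0 xs b) = edges_nat s a b.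
  move=> an bn; case: (ltngtP a b) => [ab|ba|->]; first by rewrite adj ?ab.
    by rewrite e_sym adj ?ba // /edges_nat orbC.
  rewrite e_irr /edges_nat orbb; apply/esym/negP => /(allP loopless) /=.
  by rewrite eqxx.
exists (fun i : 'I_n => nth x0 xs i); split=> [i j fij|i j]; last exact: adj.
apply/val_inj/eqP; move/allP/(_ i): tf; rewrite mem_iota ltn_ord => /(_ isT).
move/allP/(_ j); rewrite mem_iota ltn_ord => /(_ isT) /orP[// | /hasP[k]].
by rewrite mem_iota add0n => kn; rewrite -!adj // fij eqxx.
Qed.

Lemma triangle_free : ~ induced_in e K3 -> forall x y z, e x y -> e y z -> e x z -> False.
Proof.
case: simple_e => e_sym e_irr noK3 x y z xy yz xz; apply: noK3.
pose f (i : 'I_3) := nth x [:: x; y; z] i.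
have adj i j : e (f i) (f j) = K3 i j.
  by case: i j => [[|[|[|//]]] ?] [[|[|[|//]]] ?]; rewrite /f /= ?e_irr // e_sym.
exists f; split=> // i j fij; apply/eqP/negPn/negP => ij.
by move: (adj i j); rewrite fij e_irr; case: i j ij {fij} => [[|[|[|//]]] ?] [[|[|[|//]]] ?].
Qed.

End InducedPatterns.

Section CycleIndex.
Variable m : nat.
Implicit Types i j : 'I_m.

Lemma ord_addA j a b : ord_add (ord_add j a) b = ord_add j (a + b).
Proof. by apply: val_inj; rewrite /= modnDml addnA. Qed.

Lemma ord_add0 j : ord_add j 0 = j.
Proof. by apply: val_inj; rewrite /= addn0 modn_small. Qed.

Lemma ord_addm j : ord_add j m = j.
Proof. by apply: val_inj; rewrite /= modnDr modn_small. Qed.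

Lemma ord_add_eq j a b : a < m -> b < m -> (ord_add j a == ord_add j b) = (a == b).
Proof. by move=> am bm; rewrite -val_eqE /= eqn_modDl !modn_small. Qed.

Lemma ord_add_eq0 j k : k < m -> (ord_add j k == j) = (k == 0).
Proof. by move=> km; rewrite -{2}(ord_add0 j) ord_add_eq // (leq_ltn_trans _ km). Qed.

Lemma ord_add_onto j i : exists2 k, k < m & i = ord_add j k.
Proof.
have m_gt0 : 0 < m := leq_ltn_trans (leq0n j) (ltn_ord j).
exists ((i + (m - j)) %% m); first by rewrite ltn_pmod.
apply: val_inj; rewrite /= modnDmr addnCA subnKC 1?ltnW // modnDr modn_small //.
Qed.

Lemma eq_set_ord_add j (A B : {set 'I_m}) :
  (forall k, k < m -> (ord_add j k \in A) = (ord_add j k \in B)) -> A = B.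
Proof. by move=> AB; apply/setP => i; have [k km ->] := ord_add_onto j i; apply: AB. Qed.

Lemma cycle_rel_ord_add j a b : a < m -> b < m ->
  cycle_rel m (ord_add j a) (ord_add j b) = (b == a.+1 %% m) || (a == b.+1 %% m).
Proof.
move=> am bm; rewrite /cycle_rel /= !modnDml -!addnA !eqn_modDl !addn1.
by rewrite (modn_small am) (modn_small bm).
Qed.

End CycleIndex.

Section Hole.
Variables (T : finType) (e : rel T).
Hypotheses (e_sym : symmetric e) (e_irr : irreflexive e).
Variables (m : nat) (c : 'I_m -> T).
Hypotheses (c_inj : injective c) (c_adj : forall i j, e (c i) (c j) = cycle_rel m i j).

Definition hole_nbrs (v : T) : {set 'I_m} := [set j | e v (c j)].

Lemma nbr_on_hole_nbrs v : nbr_on e c v = c @: hole_nbrs v.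
Proof.
apply/setP => u; rewrite !inE; apply/andP/imsetP => [[vu /codomP[j uj]]|[j]].
  by exists j; rewrite // inE -uj.
by rewrite inE => vj ->; rewrite codom_f.
Qed.

Lemma hole_adj j a b : a < m -> b < m ->
  e (c (ord_add j a)) (c (ord_add j b)) = (b == a.+1 %% m) || (a == b.+1 %% m).
Proof. by move=> am bm; rewrite c_adj cycle_rel_ord_add. Qed.

Lemma hole_nbrs_on_hole i : 2 < m -> hole_nbrs (c (ord_add i 1)) = [set i; ord_add i 2].
Proof.
move=> m_gt2; apply: (eq_set_ord_add (j := i)) => k km.
rewrite !inE ord_add_eq0 // ord_add_eq // hole_adj //; last lia.
rewrite (modn_small m_gt2) orbC.
case: (ltnP k.+1 m) => [k1m|mk1]; first by rewrite modn_small //; lia.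
have -> : k.+1 = m by lia.
by rewrite modnn; lia.
Qed.

Lemma shortcut_hole v j g : v \notin codom c -> 3 <= g -> g.+1 < m ->
  e v (c j) -> e v (c (ord_add j g)) -> (forall k, 0 < k < g -> ~~ e v (c (ord_add j k))) ->
  exists c' : 'I_g.+2 -> T, is_hole e c'.
Proof.
move=> vC g3 gm vj vg gap.
have v_adj k : k <= g -> e v (c (ord_add j k)) = (k == 0) || (k == g).
  move=> kg; have [->|k0] := eqVneq k 0; first by rewrite ord_add0 vj.
  have [->|kg'] := eqVneq k g; first by rewrite vg orbT.
  by rewrite (negbTE (gap k _)) ?(negbTE k0) ?(negbTE kg') //; lia.
exists (fun k : 'I_g.+2 => if k <= g then c (ord_add j k) else v).
split; first lia; split=> [[a a_lt] [b b_lt] /= c'ab|[a a_lt] [b b_lt]].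
- apply: val_inj => /=; move: c'ab.
  case: (leqP a g) => ag; case: (leqP b g) => bg.
  + by move/c_inj/eqP; rewrite ord_add_eq; [move/eqP | lia | lia].
  + by move=> cv; case/negP: vC; rewrite -cv codom_f.
  + by move=> vc; case/negP: vC; rewrite vc codom_f.
  + by move=> _; lia.
- rewrite /cycle_rel /= !addn1; case: (leqP a g) => ag; case: (leqP b g) => bg.
  + by rewrite hole_adj ?(modn_small (_ : a.+1 < m)) ?(modn_small (_ : b.+1 < m)) ?modn_small //; lia.
  + have -> : b = g.+1 by lia.
    by rewrite e_sym v_adj // modnn (modn_small (_ : a.+1 < g.+2)) //; lia.
  + have -> : a = g.+1 by lia.
    by rewrite v_adj // modnn (modn_small (_ : b.+1 < g.+2)) //; lia.
  + have -> : a = g.+1 by lia.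
    have -> : b = g.+1 by lia.
    by rewrite e_irr modnn.
Qed.

Hypothesis no_triangle : forall x y z, e x y -> e y z -> e x z -> False.
Hypothesis shortest : forall m' (c' : 'I_m' -> T), is_hole e c' -> m <= m'.
Hypothesis m_ge10 : 10 <= m.

Lemma hole_adj_small j a b : a < 9 -> b < 9 ->
  e (c (ord_add j a)) (c (ord_add j b)) = (b == a.+1) || (a == b.+1).
Proof. by move=> a9 b9; rewrite hole_adj ?modn_small //; lia. Qed.

Lemma next_hole_nbr v j : v \notin codom c -> e v (c j) ->
  exists2 g, g \in [:: 2; m - 2; m] &
    e v (c (ord_add j g)) /\ forall k, 0 < k -> e v (c (ord_add j k)) -> g <= k.
Proof.
move=> vC vj.
have has_next : exists k, (0 < k) && e v (c (ord_add j k)).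
  by exists m; rewrite ord_addm vj andbT; lia.
case: (ex_minnP has_next) => g /andP[g_gt0 vg] g_min.
have {}g_min k : 0 < k -> e v (c (ord_add j k)) -> g <= k.
  by move=> k0 vk; apply: g_min; rewrite k0.
exists g => //; have g_le_m : g <= m by apply: g_min; rewrite ?ord_addm //; lia.
have g_ne1 : g != 1.
  apply: contraTneq vg => ->; apply/negP => v1; apply: (no_triangle vj _ v1).
  by rewrite -{1}(ord_add0 j) hole_adj_small.
have g_ne_m1 : g != m - 1.
  apply: contraTneq vg => ->; apply/negP => vm1; apply: (no_triangle vm1 _ vj).
  have m1 : (m - 1).+1 = m by lia.
  have m1_lt : m - 1 < m by lia.
  have m_gt0 : 0 < m by lia.
  by rewrite -{2}(ord_add0 j) hole_adj // m1 modnn.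
have g_long : ~~ ((3 <= g) && (g.+2 < m)).
  apply/negP => /andP[g3 gm].
  have gap k : 0 < k < g -> ~~ e v (c (ord_add j k)).
    by case/andP=> k0 kg; apply/negP => /(g_min k k0); rewrite leqNgt kg.
  have [c' /shortest] := shortcut_hole vC g3 (ltnW gm) vj vg gap.
  by rewrite leqNgt gm.
by rewrite !inE; lia.
Qed.

Lemma next_hole_nbr_at2 v j a b : v \notin codom c ->
  e v (c (ord_add j a)) -> e v (c (ord_add j b)) -> a < b <= a + (m - 3) ->
  ~~ e v (c (ord_add j a.+1)) /\ e v (c (ord_add j a.+2)).
Proof.
move=> vC va vb /andP[ab b_le]; have [g g_in [vg g_min]] := next_hole_nbr vC va.
have g2 : g = 2.
  have : g <= b - a by apply: g_min; rewrite ?subn_gt0 // ord_addA subnKC // ltnW.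
  by move: g_in; rewrite !inE; lia.
move: vg g_min; rewrite g2 ord_addA addn2 => vg g_min; split=> //.
by apply/negP; rewrite -addn1 -ord_addA => /(g_min 1 isT).
Qed.

Hypotheses (no_T2 : ~ induced_in e T2) (no_X2 : ~ induced_in e X2).

(* Checks the 21 adjacencies of a 7-vertex embedding built from hole vertices
   c (ord_add b k), k < 9, and other vertices whose adjacencies are given by [facts]. *)
Local Ltac check_pairs7 facts :=
  move=> [|[|[|[|[|[|?]]]]]] [|[|[|[|[|[|[|?]]]]]]] //=;
  rewrite ?ltnS ?ltn0 ?andbF //= => _; rewrite /edges_nat !inE ?xpair_eqE /=;
  first [ by rewrite ?hole_adj_small ?facts | by rewrite e_sym ?hole_adj_small ?facts ].

Lemma no_alternating_nbrs v j : v \notin codom c ->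
  e v (c j) -> e v (c (ord_add j 2)) -> e v (c (ord_add j 4)) -> False.
Proof.
move=> vC vj v2 v4.
have v0 : e v (c (ord_add j 0)) by rewrite ord_add0.
have vm : e v (c (ord_add j m)) by rewrite ord_addm.
have [v1 _] := next_hole_nbr_at2 vC v0 v2 ltac:(lia).
have [v3 _] := next_hole_nbr_at2 vC v2 v4 ltac:(lia).
have [_ v6] := next_hole_nbr_at2 vC v4 vm ltac:(lia).
have [v7 _] := next_hole_nbr_at2 vC v6 vm ltac:(lia).
apply: no_T2; apply: (induced_in_edges_rel (conj e_sym e_irr) (x0 := v)
  (xs := [:: v; c (ord_add j 0); c (ord_add j 4); c (ord_add j 6);
             c (ord_add j 1); c (ord_add j 3); c (ord_add j 7)])) => //.
by check_pairs7 (v0, v4, v6, negbTE v1, negbTE v3, negbTE v7).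
Qed.

Lemma hole_nbrs_pair v j : v \notin codom c ->
  e v (c j) -> e v (c (ord_add j 2)) -> hole_nbrs v = [set j; ord_add j 2].
Proof.
move=> vC vj v2; have [g g_in [vg g_min]] := next_hole_nbr vC v2.
have v0 : e v (c (ord_add j 0)) by rewrite ord_add0.
have [v1 _] := next_hole_nbr_at2 vC v0 v2 ltac:(lia).
have g_def : g = m - 2.
  have g_le : g <= m - 2.
    by apply: g_min; [lia | rewrite ord_addA subnKC ?ord_addm //; lia].
  move: g_in; rewrite !inE => /or3P[] /eqP // g2; last by lia.
  by subst g; exfalso; move: vg; rewrite ord_addA; exact: no_alternating_nbrs.
have m_gt2 : 2 < m by lia.
apply: (eq_set_ord_add (j := j)) => k km; rewrite !inE ord_add_eq0 // ord_add_eq //.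
case: k km => [|[|[|k]]] km; rewrite ?ord_add0 ?vj ?(negbTE v1) ?v2 //.
apply/negbTE/negP; rewrite -[k.+3]/(2 + k.+1) -ord_addA => /(g_min k.+1 isT); lia.
Qed.

Lemma hole_nbrs_cases v j : v \notin codom c -> e v (c j) ->
  exists i, hole_nbrs v = [set i] \/ hole_nbrs v = [set i; ord_add i 2].
Proof.
move=> vC vj; have [g g_in [vg g_min]] := next_hole_nbr vC vj.
move: g_in; rewrite !inE => /or3P[] /eqP g_def; move: vg g_min; rewrite g_def => vg g_min.
- by exists j; right; apply: hole_nbrs_pair.
- exists (ord_add j (m - 2)); right; apply: hole_nbrs_pair => //.
  by rewrite ord_addA subnK ?ord_addm //; lia.
- exists j; left; apply: (eq_set_ord_add (j := j)) => k km; rewrite !inE ord_add_eq0 //.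
  case: (posnP k) => [->|k_gt0]; first by rewrite ord_add0 vj.
  by apply/negbTE/negP => /(g_min _ k_gt0); lia.
Qed.

Lemma hole_nbrs_set1_pendant x y i :
  hole_nbrs y = [set i] -> e y x -> hole_nbrs x != set0.
Proof.
move=> Ny yx; apply/negP => /eqP Nx.
have x_c k : e x (c k) = false by have := in_set0 k; rewrite -Nx inE.
have y_c j : e y (c j) = (j == i) by rewrite -in_set1 -Ny inE.
pose b := ord_add i (m - 2).
have i_b : i = ord_add b 2 by rewrite ord_addA subnK ?ord_addm //; lia.
have y_b k : k < 9 -> e y (c (ord_add b k)) = (k == 2).
  by move=> k9; rewrite y_c i_b ord_add_eq //; lia.
apply: no_T2; apply: (induced_in_edges_rel (conj e_sym e_irr) (x0 := x)
  (xs := [:: c (ord_add b 2); c (ord_add b 1); c (ord_add b 3); y;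
             c (ord_add b 0); c (ord_add b 4); x])) => //.
by check_pairs7 (y_b, x_c, yx).
Qed.

Lemma hole_nbrs_set2_pendant x y i :
  hole_nbrs y = [set i; ord_add i 2] -> e y x -> hole_nbrs x != set0.
Proof.
move=> Ny yx; apply/negP => /eqP Nx.
have x_c k : e x (c k) = false by have := in_set0 k; rewrite -Nx inE.
have y_c j : e y (c j) = (j == i) || (j == ord_add i 2) by rewrite -in_set2 -Ny inE.
pose b := ord_add i (m - 1).
have i_b : i = ord_add b 1 by rewrite ord_addA subnK ?ord_addm //; lia.
have y_b k : k < 9 -> e y (c (ord_add b k)) = (k == 1) || (k == 3).
  by move=> k9; rewrite y_c i_b ord_addA !ord_add_eq //; lia.
apply: no_X2; apply: (induced_in_edges_rel (conj e_sym e_irr) (x0 := x)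
  (xs := [:: c (ord_add b 3); y; c (ord_add b 1); c (ord_add b 2);
             c (ord_add b 4); x; c (ord_add b 0)])) => //.
by check_pairs7 (y_b, x_c, yx).
Qed.

Hypothesis e_connected : connected_graph e.

Lemma hole_nbrs_shape v :
  exists i, hole_nbrs v = [set i] \/ hole_nbrs v = [set i; ord_add i 2].
Proof.
have m_gt2 : 2 < m by lia.
have [/codomP[j ->]|vC] := boolP (v \in codom c).
  exists (ord_add j (m - 1)); right.
  by rewrite -hole_nbrs_on_hole // ord_addA subnK ?ord_addm //; lia.
suff /set0Pn[j]: hole_nbrs v != set0 by rewrite inE => vj; exact: hole_nbrs_cases vC vj.
have nbrs_closed : closed e [pred x | hole_nbrs x != set0].
  suff nbrs_adj x y : e y x -> hole_nbrs y != set0 -> hole_nbrs x != set0.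
    by move=> x y xy; apply/idP/idP; apply: nbrs_adj; rewrite // e_sym.
  move=> yx /set0Pn[k]; rewrite inE => yk.
  have [/codomP[j yj]|yC] := boolP (y \in codom c).
    by apply/set0Pn; exists j; rewrite inE e_sym -yj.
  have [i [Ny|Ny]] := hole_nbrs_cases yC yk.
  - exact: hole_nbrs_set1_pendant Ny yx.
  - exact: hole_nbrs_set2_pendant Ny yx.
have m_gt0 : 0 < m by lia.
pose i0 : 'I_m := Ordinal m_gt0.
have := closed_connect nbrs_closed (e_connected (c i0) v); rewrite !inE => <-.
by apply/set0Pn; exists (ord_add i0 1); rewrite inE -{1}(ord_add0 i0) hole_adj_small.
Qed.

End Hole.

Theorem proposition3p4 (T : finType) (e : rel T) :
  simple_graph e -> connected_graph e -> almost_bipartite_permutation e ->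
  forall (m : nat) (c : 'I_m -> T),
    is_hole e c ->
    (forall (m' : nat) (c' : 'I_m' -> T), is_hole e c' -> m <= m') ->
    forall v : T,
      (exists i : 'I_m, nbr_on e c v = [set c i]) \/
      (exists i : 'I_m, nbr_on e c v = [set c i; c (ord_add i 2)]).
Proof.
move=> simple_e e_connected [no_T2 no_X2 _ no_K3 no_short_holes] m c
  [m_ge5 [c_inj c_adj]] shortest v.
have [e_sym e_irr] := simple_e.
have m_ge10 : 10 <= m.
  rewrite leqNgt; apply/negP => m_lt10.
  by apply: (no_short_holes m); [lia | exists c].
have [i [Nv|Nv]] := hole_nbrs_shape e_sym e_irr c_inj c_adj (triangle_free simple_e no_K3)
  shortest m_ge10 no_T2 no_X2 e_connected v.
- by left; exists i; rewrite nbr_on_hole_nbrs Nv imset_set1.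
- by right; exists i; rewrite nbr_on_hole_nbrs Nv imsetU1 imset_set1.
Qed.
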